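(* Let $M$ be a CNM of size $n\ge 1$. Then there exist $N\ge 0$ and a sequence $M_0=M,M_1,\dots,M_N$ of CNMs of size $n$ such that for each $0\le i<N$, $M_{i+1}$ is obtained from $M_i$ by interchanging two rows or interchanging two columns, and $M_N$ is upper-diagonal.
   Context: A complete non-ambiguous matrix (CNM) of size $n$ is an $n\times n$ matrix $M=(m_{i,j})$ with entries in $\{0,1\}$ whose support $T=\{(i,j): m_{i,j}=1\}$ (whose elements are called vertices) satisfies: (1) $(1,1)\in T$; (2) for every $p=(i,j)\in T$ with $p\neq(1,1)$, exactly one of the following holds: there is $(i',j)\in T$ with $i'<i$, or there is $(i,j')\in T$ with $j'<j$; (3) every row and every column of $M$ contains at least one vertex; (4) define the parent of $p=(i,j)\neq(1,1)$ to be $(i',j)$ with $i'<i$ maximal if such a vertex exists, and otherwise $(i,j')$ with $j'<j$ maximal; then every vertex is the parent of either zero or exactly two vertices. A vertex with no children is a leaf. A CNM of size $n$ is upper-diagonal if its leaves are exactly the positions $(i,n+1-i)$, $1\le i\le n$. *)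

From mathcomp Require Import all_boot all_algebra.
Set Implicit Arguments. Unset Strict Implicit. Unset Printing Implicit Defensive.

(* Matrices are n x n with entries in bool
   ('M[bool]_n); indices are 0-based ('I_n), so the paper's (1,1) is the
   position with row and column index 0, and the paper's anti-diagonal
   position (i, n+1-i) (1-based) is the 0-based position (i, j) with
   i + j = n - 1.  The support T is the set of (i,j) with M i j = true. *)

Section CNM.
Variable n : nat.
Implicit Types (M : 'M[bool]_n) (i j k : 'I_n).

Definition is_root i j : bool := (val i == 0) && (val j == 0).

Definition has_above M i j : bool := [exists k : 'I_n, (k < i) && M k j].
Definition has_left M i j : bool := [exists k : 'I_n, (k < j) && M i k].

Definition is_parent M (i' j' i j : 'I_n) : bool :=
  [&& M i j, ~~ is_root i j, M i' j' &
   ((j' == j) && (i' < i) &&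
       [forall k : 'I_n, ((i' < k) && (k < i)) ==> ~~ M k j])
   || ((i' == i) && (j' < j) && ~~ has_above M i j &&
       [forall k : 'I_n, ((j' < k) && (k < j)) ==> ~~ M i k])].

Definition nchildren M i j : nat :=
  #|[set p : 'I_n * 'I_n | is_parent M i j p.1 p.2]|.

Definition isCNM M : Prop :=
  [/\ (exists i j, is_root i j && M i j),
      (forall i j, M i j -> ~~ is_root i j -> has_above M i j (+) has_left M i j),
      (forall i, exists j, M i j),
      (forall j, exists i, M i j) &
      (forall i j, M i j -> nchildren M i j = 0 \/ nchildren M i j = 2)].

Definition is_leaf M i j : bool := M i j && (nchildren M i j == 0).

Definition upper_diagonal M : Prop :=
  forall i j, is_leaf M i j = (val i + val j == n.-1).

Definition swap_step (M M' : 'M[bool]_n) : Prop :=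
  exists i1 i2 : 'I_n, i1 != i2 /\ (M' = xrow i1 i2 M \/ M' = xcol i1 i2 M).

End CNM.

(* The vertices form a binary tree rooted at (1,1).  The leftmost
   vertex of a row, its head, has its parent above it in the same column, so
   the rows themselves form a tree; listing the head columns along the path of
   ancestor rows gives every row an address.  Ordered lexicographically, with a
   prefix first and larger columns first, addresses are a total order on rows
   in which any two rows meeting in a column appear in their current order.
   Bubble-sorting the rows into this order thus only swaps adjacent rows that
   share no column, which keeps the order of the vertices in every column and
   hence keeps the matrix a CNM; the first row never moves since it meets the
   second.  The columns are then sorted the same way, through the transpose, by
   the reversed address of their bottom vertex.  In the result every row and
   every column contains exactly one leaf, and the two orders force the leaf
   columns to decrease down the rows, so the leaves form the anti-diagonal. *)

From mathcomp Require Import all_boot all_order perm matrix zify.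
Set Implicit Arguments. Unset Strict Implicit. Unset Printing Implicit Defensive.
Import Order.Theory.

Section FirstAfter.
Variable n : nat.
Implicit Types (P : pred 'I_n) (i a b : 'I_n).

Definition first_after P i a :=
  [&& P a, i < a & [forall k : 'I_n, (i < k < a) ==> ~~ P k]].

Lemma first_after_uniq P i a b : first_after P i a -> first_after P i b -> a = b.
Proof.
case/and3P=> Pa ia /forallP Fa; case/and3P=> Pb ib /forallP Fb.
case: (ltngtP a b) => ab; last exact: val_inj.
- by have := Fb a; rewrite ia ab Pa.
- by have := Fa b; rewrite ib ab Pb.
Qed.

Lemma first_afterP P i :
  reflect (exists a, first_after P i a) [exists k : 'I_n, (i < k) && P k].
Proof.
apply: (iffP existsP) => [[k0 Pk0]|[a /and3P[Pa ia _]]]; last by exists a; rewrite ia Pa.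
have [a /andP[ia Pa] amin] := arg_minnP (P := fun k : 'I_n => (i < k) && P k) val Pk0.
exists a; rewrite /first_after Pa ia; apply/forallP => k; apply/implyP => /andP[ik ka].
by apply/negP => Pk; have := amin k; rewrite ik Pk => /(_ isT); rewrite leqNgt ka.
Qed.

Lemma exists_first P : (exists i, P i) -> exists i, P i && ~~ [exists k : 'I_n, (k < i) && P k].
Proof.
case=> i0 Pi0; have [i Pi imin] := arg_minnP (P := P) val Pi0.
exists i; rewrite Pi; apply/existsP => -[k /andP[ki Pk]].
by have := imin k Pk; rewrite leqNgt ki.
Qed.

Lemma exists_last P : (exists i, P i) -> exists i, P i && ~~ [exists k : 'I_n, (i < k) && P k].
Proof.
case=> i0 Pi0; have [i Pi imax] := arg_maxnP (P := P) val Pi0.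
exists i; rewrite Pi; apply/existsP => -[k /andP[ik Pk]].
by move: (imax k Pk); rewrite /= leqNgt ik.
Qed.

End FirstAfter.

Lemma card_set_unique (T : finType) (P : pred T) :
  (forall x y, P x -> P y -> x = y) -> #|[set x | P x]| = [exists x, P x].
Proof.
move=> Puniq; case: existsP => [[x Px]|noP].
  rewrite (_ : [set x | P x] = [set x]) ?cards1 //; apply/setP => y; rewrite !inE.
  by apply/idP/eqP => [Py|->//]; apply: Puniq.
apply/eqP; rewrite cards_eq0; apply/eqP/setP => y; rewrite !inE.
by apply/negP => Py; apply: noP; exists y.
Qed.

Section LexiPrefix.
Variables (d : Order.disp_t) (T : porderType d).
Implicit Types (s u v : seqlexi T) (x y : T).

Lemma ltxi_prefix s x u : (s < s ++ x :: u)%O.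
Proof. by elim: s => [|y s IH]; rewrite ?ltxi0s // eqhead_ltxiE. Qed.

Lemma ltxi_diverge s x y u v : (x < y)%O -> (s ++ x :: u < s ++ y :: v :> seqlexi T)%O.
Proof.
move=> xy; elim: s => [|z s IH]; last by rewrite /= eqhead_ltxiE.
by rewrite /= neqhead_ltxiE ?xy // lt_eqF.
Qed.

End LexiPrefix.

Section Rank.
Variables (T : finType) (d : Order.disp_t) (U : orderType d) (f : T -> U).

Definition rank a := #|[set b | (f b < f a)%O]|.

Lemma ltn_rank a b : (rank a < rank b) = (f a < f b)%O.
Proof.
case: (ltP (f a) (f b)) => [ab|ba].
  apply: proper_card; apply/properP; split; last by exists a; rewrite !inE ?ab ?ltxx.
  by apply/subsetP => c; rewrite !inE => /lt_trans; apply.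
apply/negbTE; rewrite -leqNgt; apply: subset_leq_card; apply/subsetP => c.
by rewrite !inE => /lt_le_trans; apply.
Qed.

Lemma rank_inj : injective f -> injective rank.
Proof.
by move=> f_inj a b ab; apply: f_inj; apply/eqP; rewrite eq_le !leNgt -!ltn_rank ab ltnn.
Qed.

End Rank.

Section Chain.
Variables (T : Type) (R : T -> T -> Prop).

Fixpoint chain x s : Prop := if s is y :: s' then R x y /\ chain y s' else True.

Lemma chain_cat x s t : chain x s -> chain (last x s) t -> chain x (s ++ t).
Proof. by elim: s x => //= y s IH x [Rxy Rs] Rt; split; last exact: IH. Qed.

Lemma chain_nth x s : chain x s -> forall k, k < size s -> R (nth x (x :: s) k) (nth x s k).
Proof.
elim: s x => //= y s IH x [Rxy Rs] [|k] //= lt_k_s.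
by rewrite (set_nth_default y) /= 1?ltnW // (set_nth_default y) //; apply: IH.
Qed.

Lemma chain_last (Q : T -> Prop) x s :
  (forall y z, R y z -> Q z) -> Q x -> chain x s -> Q (last x s).
Proof. by move=> RQ; elim: s x => //= y s IH x _ [/RQ Qy chain_s]; apply: IH. Qed.

End Chain.

Lemma chain_map (T U : Type) (R : T -> T -> Prop) (R' : U -> U -> Prop) (f : T -> U) :
  (forall x y, R x y -> R' (f x) (f y)) -> forall x s, chain R x s -> chain R' (f x) (map f s).
Proof. by move=> RR' x s; elim: s x => //= y s IH x [/RR' ? ?]; split; last exact: IH. Qed.

Lemma adjacent_homo n (f : 'I_n -> nat) :
  (forall x y : 'I_n, val y = x.+1 -> f x < f y) -> {homo f : x y / x < y}.
Proof.
case: n f => [|n] f f_adj x y xy; first by have := ltn_ord x.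
suff: {in [pred k | k < n.+1] &, {homo (fun k => f (inord k)) : i j / i < j}}.
  by move/(_ x y); rewrite !inE !inord_val; apply.
apply: homo_ltn_in; first exact: (fun y => @ltn_trans y).
- by move=> i j _ jD k /andP[_ kj]; rewrite !inE in jD *; apply: ltn_trans kj jD.
- by move=> i; rewrite !inE => ltin ltSin; apply: f_adj; rewrite /= !inordK.
Qed.

Section BubbleSort.
Variables (n : nat) (key : 'I_n -> nat) (P : {perm 'I_n} -> Prop).
Hypothesis key_inj : injective key.
Hypothesis P_swap : forall p (x y : 'I_n),
  P p -> val y = x.+1 -> key (p y) < key (p x) -> P (tperm x y * p)%g.

Definition perm_swap_step (p p' : {perm 'I_n}) :=
  P p' /\ exists x y : 'I_n, x != y /\ p' = (tperm x y * p)%g.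

Definition potential (p : {perm 'I_n}) := \sum_(x : 'I_n) x * key (p x).

Lemma potential_le p : potential p <= n * \sum_(x : 'I_n) key x.
Proof.
rewrite /potential big_distrr [X in _ <= X](reindex_inj (@perm_inj _ p)) /=.
by apply: leq_sum => x _; rewrite leq_mul2r ltnW ?orbT.
Qed.

Lemma potential_swap (p : {perm 'I_n}) (x y : 'I_n) : val y = x.+1 ->
  key (p y) < key (p x) -> potential p < potential (tperm x y * p)%g.
Proof.
move=> yx desc; have xy : x != y by rewrite neq_ltn yx ltnSn.
have split2 F : \sum_(z : 'I_n) F z = F x + F y + \sum_(z : 'I_n | (z != x) && (z != y)) F z.
  by rewrite (bigD1 x) //= (bigD1 y) 1?eq_sym //= addnA.
rewrite /potential !split2 !permM tpermL tpermR.
rewrite [X in _ < _ + X](eq_bigr (fun z : 'I_n => z * key (p z))) => [|z /andP[zx zy]]; last first.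
  by rewrite permM tpermD // eq_sym.
rewrite ltn_add2r; have -> : nat_of_ord y = x.+1 := yx.
by rewrite !mulSn; lia.
Qed.

Lemma bubble_sort p : P p ->
  exists s, chain perm_swap_step p s /\ {homo key \o last p s : x y / x < y}.
Proof.
have [m] := ubnP (n * \sum_(x : 'I_n) key x - potential p).
elim: m p => // m IH p bound Pp.
have [/existsP[x /existsP[y /andP[/eqP yx desc]]]|sorted] :=
  boolP [exists x : 'I_n, exists y : 'I_n, (val y == x.+1) && (key (p y) < key (p x))].
  have Pp' := P_swap Pp yx desc.
  have [|s [chain_s sorted]] := IH _ _ Pp'.
    by move: bound (potential_swap yx desc) (potential_le (tperm x y * p)); lia.
  exists ((tperm x y * p)%g :: s); do 3!split=> //.
  by exists x, y; rewrite neq_ltn yx ltnSn.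
exists [::]; split => //; apply: adjacent_homo => x y yx /=.
move/existsPn/(_ x)/existsPn/(_ y): sorted; rewrite yx eqxx /= -leqNgt leq_eqVlt.
by case/orP => // /eqP/key_inj/perm_inj xy; move: yx; rewrite xy => /n_Sn.
Qed.

End BubbleSort.

Lemma tperm_adj_ltn n (x y a b : 'I_n) : val y = x.+1 ->
  ~~ [&& a \in [set x; y], b \in [set x; y] & a != b] ->
  (tperm x y a < tperm x y b) = (a < b).
Proof.
move=> yx; have ey : nat_of_ord y = x.+1 := yx; rewrite !inE.
case: tpermP => [->|->|/eqP + /eqP +]; case: tpermP => [->|->|/eqP + /eqP +];
  by rewrite -!val_eqE /= ?ltnn; lia.
Qed.

Section Children.
Variable n : nat.
Implicit Types (M : 'M[bool]_n) (i j a b : 'I_n).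

Definition has_below M i j : bool := [exists k : 'I_n, (i < k) && M k j].
Definition has_right M i j : bool := [exists k : 'I_n, (j < k) && M i k].

Definition above_xor_left M :=
  forall i j, M i j -> ~~ is_root i j -> has_above M i j (+) has_left M i j.

Variable M : 'M[bool]_n.
Hypothesis Mxor : above_xor_left M.

Lemma is_parentE i j a b : M i j ->
  is_parent M i j a b = ((b == j) && first_after (fun k => M k j) i a)
                        || ((a == i) && first_after (M i) j b).
Proof.
move=> Mij; rewrite /is_parent /first_after Mij /= ![_ == j]eq_sym ![_ == i]eq_sym.
have [<-|nbj] := eqVneq j b; have [<-|nai] := eqVneq i a; rewrite ?ltnn ?andbF //=.
- case: (ltnP i a) => [ia|]; rewrite ?andbF //= orbF.
  have a0 : val a != 0 by rewrite -lt0n (leq_ltn_trans _ ia).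
  by rewrite /is_root (negbTE a0) orbF.
- case Mib: (M i b) => //=; case: (ltnP j b) => [jb|]; rewrite ?andbF //=.
  have b0 : val b != 0 by rewrite -lt0n (leq_ltn_trans _ jb).
  have nroot : ~~ is_root i b by rewrite /is_root (negbTE b0) andbF.
  have hl : has_left M i b by apply/existsP; exists j; rewrite jb Mij.
  by have := Mxor Mib nroot; rewrite hl addbT => ->; rewrite nroot.
Qed.

Lemma nchildrenE i j : M i j -> nchildren M i j = has_below M i j + has_right M i j.
Proof.
move=> Mij; rewrite /nchildren; pose below p := (p.2 == j) && first_after (fun k => M k j) i p.1.
pose right p := (p.1 == i) && first_after (M i) j p.2.
have -> : [set p : 'I_n * 'I_n | is_parent M i j p.1 p.2]
          = [set p | below p] :|: [set p | right p].
  by apply/setP => p; rewrite !inE is_parentE.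
rewrite cardsU (_ : _ :&: _ = set0) ?cards0 ?subn0; last first.
  apply/setP => -[a b]; rewrite !inE /below /right /=.
  by apply/negP => /andP[/andP[_ /and3P[_ ia _]] /andP[/eqP ai _]]; rewrite ai ltnn in ia.
rewrite !card_set_unique.
- congr (nat_of_bool _ + nat_of_bool _).
  + apply/existsP/first_afterP => -[p]; last by exists (p, j); rewrite /below eqxx.
    by case/andP=> _ ?; exists p.1.
  + apply/existsP/first_afterP => -[p]; last by exists (i, p); rewrite /right eqxx.
    by case/andP=> _ ?; exists p.2.
- move=> [a b] [a' b'] /andP[/= /eqP-> f] /andP[/= /eqP-> f'].
  by rewrite (first_after_uniq f f').
- move=> [a b] [a' b'] /andP[/= /eqP-> f] /andP[/= /eqP-> f'].
  by rewrite (first_after_uniq f f').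
Qed.

End Children.

Section CNMAxioms.
Variable n : nat.
Implicit Types (M : 'M[bool]_n) (i j : 'I_n).

(* Condition (4) in local form: by [nchildrenE], a vertex has zero or two
   children iff it has a vertex below it exactly when it has one to its right. *)
Definition cnm_axioms M : Prop :=
  [/\ (exists i j, is_root i j && M i j),
      above_xor_left M,
      (forall i, exists j, M i j),
      (forall j, exists i, M i j) &
      (forall i j, M i j -> has_below M i j = has_right M i j)].

Lemma isCNME M : isCNM M <-> cnm_axioms M.
Proof.
split=> -[root Mxor rows cols children]; split=> // i j Mij; have := children i j Mij.
  by rewrite nchildrenE //; case: has_below; case: has_right => -[].
by rewrite nchildrenE // => ->; case: has_right; [right|left].
Qed.

Lemma is_leafE M i j : cnm_axioms M -> is_leaf M i j = M i j && ~~ has_right M i j.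
Proof.
case=> _ Mxor _ _ children; rewrite /is_leaf; case Mij: (M i j) => //=.
by rewrite nchildrenE // children //; case: has_right.
Qed.

Lemma has_above_tr M i j : has_above M^T i j = has_left M j i.
Proof. by apply: eq_existsb => k; rewrite mxE. Qed.
Lemma has_left_tr M i j : has_left M^T i j = has_above M j i.
Proof. by apply: eq_existsb => k; rewrite mxE. Qed.
Lemma has_below_tr M i j : has_below M^T i j = has_right M j i.
Proof. by apply: eq_existsb => k; rewrite mxE. Qed.
Lemma has_right_tr M i j : has_right M^T i j = has_below M j i.
Proof. by apply: eq_existsb => k; rewrite mxE. Qed.

Lemma cnm_axioms_tr M : cnm_axioms M -> cnm_axioms M^T.
Proof.
case=> [[i [j /andP[root Mij]]] Mxor rows cols children]; split.
- by exists j, i; rewrite mxE Mij andbT /is_root andbC.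
- move=> i' j'; rewrite mxE has_above_tr has_left_tr addbC /is_root andbC; exact: Mxor.
- by move=> i'; have [j' Mji] := cols i'; exists j'; rewrite mxE.
- by move=> j'; have [i' Mji] := rows j'; exists i'; rewrite mxE.
- by move=> i' j'; rewrite mxE has_below_tr has_right_tr => /children ->.
Qed.

Lemma first_rows_meet M (x y : 'I_n) : cnm_axioms M -> val x = 0 -> val y = 1 ->
  exists c, M x c && M y c.
Proof.
case=> _ Mxor rows _ _ x0 y1; have [c /andP[Myc noleft]] := exists_first (rows y).
have nroot : ~~ is_root y c by rewrite /is_root y1.
have /existsP[k /andP[ky Mkc]] : has_above M y c.
  by have := Mxor _ _ Myc nroot; rewrite /has_left (negbTE noleft) addbF.
have -> : x = k by apply: val_inj; move: ky x0 y1 => /=; lia.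
by exists c; rewrite Mkc.
Qed.

End CNMAxioms.

Section RowPerm.
Variable n : nat.
Implicit Types (M : 'M[bool]_n) (p : 'S_n) (i j : 'I_n).

Definition keeps_col_order M p :=
  forall x y c, M (p x) c -> M (p y) c -> (x < y) = (p x < p y).

Definition fixes_zero p := forall i, (val (p i) == 0) = (val i == 0).

Lemma exists_perm p (P : pred 'I_n) (r : rel 'I_n) i :
  (forall x, P (p x) -> r x i = r (p x) (p i)) ->
  [exists k, r k i && P (p k)] = [exists k, r k (p i) && P k].
Proof.
move=> rp; apply/existsP/existsP => -[k /andP[rk Pk]]; first by exists (p k); rewrite -rp // rk.
by exists (p^-1 k)%g; rewrite rp permKV ?rk ?Pk // permKV.
Qed.

Variables (M : 'M[bool]_n) (p : 'S_n).
Hypothesis p_order : keeps_col_order M p.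

Lemma has_above_row_perm i j : M (p i) j ->
  has_above (row_perm p M) i j = has_above M (p i) j.
Proof.
move=> Mij; transitivity [exists k : 'I_n, (k < i) && M (p k) j].
  by apply: eq_existsb => k; rewrite mxE.
by apply: (exists_perm (P := M^~ j) (r := fun k i => k < i)) => x Mxj; apply: p_order Mxj Mij.
Qed.

Lemma has_below_row_perm i j : M (p i) j ->
  has_below (row_perm p M) i j = has_below M (p i) j.
Proof.
move=> Mij; transitivity [exists k : 'I_n, (i < k) && M (p k) j].
  by apply: eq_existsb => k; rewrite mxE.
by apply: (exists_perm (P := M^~ j) (r := fun k i => i < k)) => x Mxj; apply: p_order Mij Mxj.
Qed.

Lemma row_perm_cnm : cnm_axioms M -> fixes_zero p -> cnm_axioms (row_perm p M).
Proof.
case=> [[i [j /andP[root Mij]]] Mxor rows cols children] p0.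
have root_perm i' j' : is_root (p i') j' = is_root i' j' by rewrite /is_root p0.
have has_lr i' j' : (has_left (row_perm p M) i' j' = has_left M (p i') j')
                    * (has_right (row_perm p M) i' j' = has_right M (p i') j').
  by split; apply: eq_existsb => k; rewrite mxE.
split.
- by exists (p^-1 i)%g, j; rewrite mxE permKV -root_perm permKV root.
- move=> i' j'; rewrite mxE -root_perm => Mij' nroot.
  by rewrite has_above_row_perm // has_lr; apply: Mxor.
- by move=> i'; have [j' Mij'] := rows (p i'); exists j'; rewrite mxE.
- by move=> j'; have [i' Mij'] := cols j'; exists (p^-1 i')%g; rewrite mxE permKV.
- move=> i' j'; rewrite mxE => Mij'.
  by rewrite has_below_row_perm // has_lr; apply: children.
Qed.

End RowPerm.

Section Tree.
Variables (n : nat) (M : 'M[bool]_n).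
Hypothesis cnm : cnm_axioms M.
Implicit Types (i j k r : 'I_n).

Definition head_col i : 'I_n := odflt i [pick j | M i j && ~~ has_left M i j].

Definition parent_row i : 'I_n :=
  odflt i [pick k | M k (head_col i) && first_after (fun r => M r (head_col i)) k i].

Definition bottom j : 'I_n := odflt j [pick k | M k j && ~~ has_below M k j].

Lemma head_colP i : M i (head_col i) && ~~ has_left M i (head_col i).
Proof.
rewrite /head_col; case: pickP => // none; case: cnm => _ _ rows _ _.
by have [j Pj] := exists_first (rows i); have := none j; rewrite Pj.
Qed.

Lemma head_col_uniq i j : M i j -> ~~ has_left M i j -> j = head_col i.
Proof.
move=> Mij noleft; case/andP: (head_colP i) => Mih /existsP noleft'.
case: (ltngtP j (head_col i)) => jh; last exact: val_inj.
- by case: noleft'; exists j; rewrite jh Mij.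
- by move/existsP: noleft; case; exists (head_col i); rewrite jh Mih.
Qed.

Lemma bottomP j : M (bottom j) j && ~~ has_below M (bottom j) j.
Proof.
rewrite /bottom; case: pickP => // none; case: cnm => _ _ _ cols _.
by have [k Pk] := exists_last (cols j); have := none k; rewrite Pk.
Qed.

Lemma le_bottom j k : M k j -> k <= bottom j.
Proof.
move=> Mkj; rewrite leqNgt; apply/negP => bk; case/andP: (bottomP j) => _ /existsP[].
by exists k; rewrite bk Mkj.
Qed.

Lemma bottom_uniq j k : M k j -> ~~ has_below M k j -> k = bottom j.
Proof.
move=> Mkj /existsP nobelow; have := le_bottom Mkj; rewrite leq_eqVlt => /orP[/eqP/val_inj //|kb].
by case: nobelow; exists (bottom j); rewrite kb; case/andP: (bottomP j).
Qed.

Lemma parent_rowP i : val i != 0 ->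
  M (parent_row i) (head_col i) && first_after (fun r => M r (head_col i)) (parent_row i) i.
Proof.
move=> i0; rewrite /parent_row; case: pickP => // none; case: cnm => _ Mxor _ _ _.
case/andP: (head_colP i) => Mih noleft; set h := head_col i in Mih noleft none *.
have nroot : ~~ is_root i h by rewrite /is_root negb_and i0.
have above : exists k, (k < i) && M k h.
  by apply/existsP; have := Mxor _ _ Mih nroot; rewrite (negbTE noleft) addbF.
have [k /andP[/andP[ki Mkh] /existsP nobetween]] := exists_last above.
suff Pk : first_after (fun r => M r h) k i by have := none k; rewrite /= Mkh Pk.
rewrite /first_after Mih ki; apply/forallP => k'.
by apply/implyP => /andP[kk' k'i]; apply/negP => Mk'h; apply: nobetween; exists k'; rewrite kk' k'i.
Qed.

Lemma parent_row_lt i : val i != 0 -> parent_row i < i.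
Proof. by case/parent_rowP/andP => _ /and3P[]. Qed.

(* [addr i] lists the head columns of the ancestor rows of [i], ending with that
   of [i] itself; [seqlexi] over the dual order on columns puts a prefix first
   and a larger column first.  The fuel of [addr_rec] only has to exceed [i]. *)
Fixpoint addr_rec (f : nat) (i : 'I_n) : seq 'I_n :=
  if f is f'.+1 then
    if val i == 0 then [::] else rcons (addr_rec f' (parent_row i)) (head_col i)
  else [::].

Definition addr i : seqlexi ('I_n)^d := addr_rec n i.

Lemma addr_recE f g i : i < f -> i < g -> addr_rec f i = addr_rec g i.
Proof.
elim: f g i => [|f IH] [|g] i //= ltif ltig; case: ifP => // /negbT i0.
by congr rcons; apply: IH; apply: leq_trans (parent_row_lt i0) _.
Qed.

Lemma addr0 i : val i = 0 -> addr i = [::].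
Proof. by move=> i0; rewrite /addr (@addr_recE n (val i).+1) //= i0. Qed.

Lemma addr_parent i : val i != 0 -> addr i = rcons (addr (parent_row i)) (head_col i).
Proof.
move=> i0; rewrite /addr (@addr_recE n (val i).+1) //= (negbTE i0).
by rewrite (@addr_recE _ n) // parent_row_lt.
Qed.

Lemma addr_col_extend r k j : r < k -> M r j -> M k j ->
  exists s, addr k = addr r ++ j :: s.
Proof.
case: cnm => _ Mxor _ _ _; have [m] := ubnP (val k); elim: m k => // m IH k km rk Mrj Mkj.
have k0 : val k != 0 by rewrite -lt0n (leq_ltn_trans _ rk).
have above : has_above M k j by apply/existsP; exists r; rewrite rk Mrj.
have nroot : ~~ is_root k j by rewrite /is_root negb_and k0.
have hj : j = head_col k.
  by apply: head_col_uniq => //; have := Mxor _ _ Mkj nroot; rewrite above addTb.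
case/parent_rowP/andP: (k0); rewrite -hj => Mpj /and3P[_ pk /forallP nobetween].
rewrite addr_parent // -hj.
case: (ltngtP r (parent_row k)) => [rp|pr|/val_inj <-]; last by exists [::]; rewrite cats1.
- have [s ->] := IH _ (leq_trans pk km) rp Mrj Mpj.
  by exists (rcons s j); rewrite rcons_cat.
- by have := nobetween r; rewrite pr rk Mrj.
Qed.

Lemma addr_inj : injective addr.
Proof.
move=> a b; have [m] := ubnP (a + b); elim: m a b => // m IH a b abm.
have [a0|a0] := eqVneq (val a) 0; have [b0|b0] := eqVneq (val b) 0.
- by move=> _; apply: val_inj; rewrite a0 b0.
- by rewrite (addr0 a0) (addr_parent b0) => /esym/eqP; rewrite -size_eq0 size_rcons.
- by rewrite (addr0 b0) (addr_parent a0) => /eqP; rewrite -size_eq0 size_rcons.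
rewrite (addr_parent a0) (addr_parent b0) => /eqP; rewrite eqseq_rcons => /andP[/eqP ep /eqP eh].
have pa := parent_rowP a0; have pb := parent_rowP b0.
have epp : parent_row a = parent_row b.
  by apply: IH ep; move: (parent_row_lt a0) (parent_row_lt b0) abm; lia.
move: pa pb; rewrite epp eh.
move=> /andP[_ /and3P[Mah pa /forallP nba]] /andP[_ /and3P[Mbh pb /forallP nbb]].
case: (ltngtP a b) => [ab|ba|/val_inj //].
- by have := nbb a; rewrite pa ab Mah.
- by have := nba b; rewrite pb ba Mbh.
Qed.

Lemma addr_lt_col r k j : r < k -> M r j -> M k j -> (addr r < addr k)%O.
Proof. by move=> rk Mrj Mkj; have [s ->] := addr_col_extend rk Mrj Mkj; apply: ltxi_prefix. Qed.

Lemma addr_bottom_lt_row r j j' : j < j' -> M r j -> M r j' ->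
  (addr (bottom j') < addr (bottom j))%O.
Proof.
case: (cnm) => _ _ _ _ children jj' Mrj Mrj'.
have /existsP[k /andP[rk Mkj]] : has_below M r j.
  by rewrite children //; apply/existsP; exists j'; rewrite jj' Mrj'.
case/andP: (bottomP j) => Mbj _; have rb := leq_trans rk (le_bottom Mkj).
have [s ->] := addr_col_extend rb Mrj Mbj.
move: (le_bottom Mrj'); rewrite leq_eqVlt => /orP[/eqP/val_inj <-|rb'].
  exact: ltxi_prefix.
case/andP: (bottomP j') => Mbj' _; have [s' ->] := addr_col_extend rb' Mrj' Mbj'.
by apply: ltxi_diverge; rewrite ltEdual.
Qed.

Lemma bottom_inj : injective bottom.
Proof.
case: cnm => _ _ _ _ children j j' bj.
case/andP: (bottomP j) => Mbj; rewrite children // => /existsP noright.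
case/andP: (bottomP j') => Mbj'; rewrite children // => /existsP noright'.
case: (ltngtP j j') => [jj'|j'j|/val_inj //].
- by case: noright; exists j'; rewrite jj' bj.
- by case: noright'; exists j; rewrite j'j -bj.
Qed.

End Tree.

Section Keys.
Variables (n : nat) (M : 'M[bool]_n).
Hypothesis cnm : cnm_axioms M.
Implicit Types (r k j : 'I_n).

Definition row_key := rank (addr M).

Definition col_key := rank (fun j => addr M (bottom M j) : (seqlexi ('I_n)^d)^d).

Lemma row_key_inj : injective row_key.
Proof. exact/rank_inj/addr_inj. Qed.

Lemma col_key_inj : injective col_key.
Proof. by apply/rank_inj => j j' /addr_inj-/(_ cnm)/bottom_inj; apply. Qed.

Lemma row_key_lt r k j : r < k -> M r j -> M k j -> row_key r < row_key k.
Proof. by move=> rk Mrj Mkj; rewrite ltn_rank (addr_lt_col cnm rk Mrj Mkj). Qed.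

Lemma col_key_lt r j j' : j < j' -> M r j -> M r j' -> col_key j < col_key j'.
Proof. by move=> jj' Mrj Mrj'; rewrite ltn_rank ltEdual (addr_bottom_lt_row cnm jj' Mrj Mrj'). Qed.

End Keys.

Section Swaps.
Variable n : nat.
Implicit Types A B C : 'M[bool]_n.

Definition cnm_step A B := swap_step A B /\ isCNM B.

Definition swaps_to A B := exists2 s, chain cnm_step A s & last A s = B.

Lemma swaps_to_trans A B C : swaps_to A B -> swaps_to B C -> swaps_to A C.
Proof.
move=> [s chain_s <-] [t chain_t <-]; exists (s ++ t); last exact: last_cat.
exact: chain_cat.
Qed.

Lemma swaps_to_tr A B : swaps_to A B -> swaps_to A^T B^T.
Proof.
case=> s chain_s <-; exists (map trmx s); last by rewrite last_map.
apply: chain_map chain_s => A' B' [[x [y [xy [->|->]]]] /isCNME/cnm_axioms_tr/isCNME cnm].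
- by split=> //; exists x, y; split=> //; right; rewrite tr_xrow.
- by split=> //; exists x, y; split=> //; left; rewrite tr_xcol.
Qed.

Lemma swaps_to_cnm A B : isCNM A -> swaps_to A B -> isCNM B.
Proof. by move=> cnmA [s chain_s <-]; apply: chain_last chain_s => // ? ? []. Qed.

End Swaps.

Section SortRows.
Variables (n : nat) (B : 'M[bool]_n) (key : 'I_n -> nat).
Hypotheses (B_cnm : cnm_axioms B) (key_inj : injective key).
Hypothesis key_col : forall a b c : 'I_n, a < b -> B a c -> B b c -> key a < key b.

Lemma sort_rows_step (p : {perm 'I_n}) (x y : 'I_n) :
  keeps_col_order B p /\ fixes_zero p -> val y = x.+1 -> key (p y) < key (p x) ->
  keeps_col_order B (tperm x y * p)%g /\ fixes_zero (tperm x y * p)%g.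
Proof.
move=> [p_order p0] yx desc.
(* [key] orders the rows meeting in a column, and the two rows are inverted. *)
have disjoint c : B (p x) c -> B (p y) c -> False.
  move=> Bxc Byc; have := p_order x y c Bxc Byc; rewrite yx ltnSn => /esym pxy.
  by have := key_col pxy Bxc Byc; rewrite ltnNge ltnW.
have x0 : val x != 0.
  apply/eqP => x0; have y1 : val y = 1 by rewrite yx x0.
  have [c] := first_rows_meet (row_perm_cnm p_order B_cnm p0) x0 y1.
  by rewrite !mxE => /andP[]; apply: disjoint.
have y0 : val y != 0 by rewrite yx.
split=> [a b c|i]; rewrite !permM; last first.
  by rewrite p0; case: tpermP => [->|->|//]; rewrite (negbTE x0) (negbTE y0).
move=> Ba Bb; rewrite -(p_order _ _ _ Ba Bb) tperm_adj_ltn //; apply/negP.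
rewrite !inE => /and3P[/orP[]/eqP ea /orP[]/eqP eb]; rewrite ea eb ?eqxx //= => _;
  move: Ba Bb; rewrite ea eb ?tpermL ?tpermR => Ba Bb.
- exact: disjoint Bb Ba.
- exact: disjoint Ba Bb.
Qed.

Lemma sort_rows : exists p : {perm 'I_n},
  [/\ keeps_col_order B p, fixes_zero p, swaps_to B (row_perm p B)
    & {homo key \o p : x y / x < y}].
Proof.
pose P p := keeps_col_order B p /\ fixes_zero p.
have P1 : P 1%g by split=> [a b c|i]; rewrite !perm1.
have [s [chain_s sorted]] := bubble_sort key_inj sort_rows_step P1.
have [p_order p0] : P (last 1%g s) by apply: chain_last chain_s => // ? ? [].
exists (last 1%g s); split=> //; rewrite -[X in swaps_to X _]row_perm1.
exists (map (fun p => row_perm p B) s); last exact: last_map.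
apply: chain_map chain_s => p p' [[p'_order p'0] [x [y [xy e]]]]; subst p'; split.
  by exists x, y; split=> //; left; rewrite row_permM.
exact/isCNME/(row_perm_cnm p'_order B_cnm p'0).
Qed.

End SortRows.

Lemma adjacent_antitone_rev n (g : 'I_n -> nat) :
  (forall x y : 'I_n, val y = x.+1 -> g y < g x) -> (forall x, g x < n) ->
  forall x : 'I_n, g x = n.-1 - x.
Proof.
case: n g => [|n] g g_adj g_lt x /=; first by have := ltn_ord x.
pose h k := g (inord k); have -> : g x = h x by rewrite /h inord_val.
have h_adj k : k < n -> h k.+1 < h k.
  by move=> lt_k_n; apply: g_adj; rewrite /= !inordK // ltnW.
have lower t k : k + t = n -> n - k <= h k.
  elim: t k => [|t IH] k kt; first by rewrite -kt addn0 subnn.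
  by have := IH k.+1 ltac:(lia); have := h_adj k ltac:(lia); lia.
have upper k : k <= n -> h k <= n - k.
  elim: k => [|k IH] lt_k_n; first by rewrite subn0 -ltnS g_lt.
  by have := IH (ltnW lt_k_n); have := h_adj k lt_k_n; lia.
have x_le_n : x <= n := ltn_ord x.
by have := lower (n - x) x ltac:(lia); have := upper x x_le_n; lia.
Qed.

Lemma upper_diagonal_antitone n (A : 'M[bool]_n) : cnm_axioms A ->
  (forall x y x' y', is_leaf A x y -> is_leaf A x' y' -> x < x' -> y' < y) ->
  upper_diagonal A.
Proof.
move=> cnmA anti.
have leaf_row x : exists y, is_leaf A x y.
  case: (cnmA) => _ _ rows _ _; have [y /andP[Axy noright]] := exists_last (rows x).
  by exists y; rewrite is_leafE // Axy.
pose g x := odflt x [pick y | is_leaf A x y].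
have gP x : is_leaf A x (g x).
  by rewrite /g; case: pickP => // none; have [y] := leaf_row x; rewrite none.
have g_uniq x y : is_leaf A x y -> y = g x.
  move: (gP x); rewrite !is_leafE // => /andP[Ag /existsP noright_g] /andP[Ay /existsP noright_y].
  case: (ltngtP y (g x)) => [yg|gy|/val_inj //].
  - by case: noright_y; exists (g x); rewrite yg Ag.
  - by case: noright_g; exists y; rewrite gy Ay.
have g_rev : forall x, nat_of_ord (g x) = n.-1 - x.
  apply: adjacent_antitone_rev => [x y yx|x]; last exact: ltn_ord.
  by apply: anti (gP x) (gP y) _; rewrite yx.
move=> i j; have gi := g_rev i; have lt_i := ltn_ord i.
apply/idP/idP => [/g_uniq-> | /eqP /= ij]; first by apply/eqP => /=; lia.
have -> : j = g i by apply: val_inj => /=; lia.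
exact: gP.
Qed.

Section SortedLeaves.
Variables (n : nat) (M : 'M[bool]_n) (p q : {perm 'I_n}).
Hypotheses (cnm : cnm_axioms M) (p_order : keeps_col_order M p).
Hypotheses (rows_sorted : {homo row_key M \o p : x y / x < y})
           (cols_sorted : {homo col_key M \o q : x y / x < y}).
Let A := col_perm q (row_perm p M).
Hypothesis cnmA : cnm_axioms A.

Lemma leaf_row_bottom x y : is_leaf A x y -> p x = bottom M (q y).
Proof.
case: (cnmA) => _ _ _ _ children; rewrite is_leafE // => /andP[Axy].
rewrite -children //; move: Axy; rewrite !mxE => Mxy.
rewrite (_ : has_below A x y = has_below (row_perm p M) x (q y)); last first.
  by apply: eq_existsb => k; rewrite !mxE.
by rewrite has_below_row_perm //; apply: bottom_uniq.
Qed.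

Lemma sorted_leaves_antitone x y x' y' :
  is_leaf A x y -> is_leaf A x' y' -> x < x' -> y' < y.
Proof.
move=> /leaf_row_bottom bx /leaf_row_bottom bx' xx'.
have ckey_lt : col_key M (q y') < col_key M (q y).
  by rewrite ltn_rank ltEdual -bx -bx' -ltn_rank; apply: rows_sorted.
case: (ltngtP y' y) => // [yy'|/val_inj eq_y]; last by rewrite eq_y ltnn in ckey_lt.
by have := cols_sorted yy'; rewrite /= ltnNge (ltnW ckey_lt).
Qed.

End SortedLeaves.

Theorem theorem4p13 (n : nat) (hn : 1 <= n) (M : 'M[bool]_n) :
  isCNM M ->
  exists s : seq 'M[bool]_n,
    [/\ forall k, k < size s -> isCNM (nth M s k),
        forall k, k < size s -> swap_step (nth M (M :: s) k) (nth M s k) &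
        upper_diagonal (last M s)].
Proof.
move=> /[dup] cnmM /isCNME cnm.
have [p [p_order p0 rows_swaps rows_sorted]] :=
  sort_rows cnm (row_key_inj cnm) (row_key_lt cnm).
have cnm1 := row_perm_cnm p_order cnm p0.
have col_key_lt_tr (a b c : 'I_n) :
    a < b -> ((row_perm p M)^T)%R a c -> ((row_perm p M)^T)%R b c -> col_key M a < col_key M b.
  by move=> ab; rewrite !mxE; apply: col_key_lt.
have [q [_ _ cols_swaps cols_sorted]] :=
  sort_rows (cnm_axioms_tr cnm1) (col_key_inj cnm) col_key_lt_tr.
have swaps : swaps_to M (col_perm q (row_perm p M)).
  apply: swaps_to_trans rows_swaps _.
  by move/swaps_to_tr: cols_swaps; rewrite trmxK tr_row_perm trmxK.
have cnmA : cnm_axioms (col_perm q (row_perm p M)).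
  exact/isCNME/(swaps_to_cnm cnmM swaps).
case: swaps => s chain_s last_s; exists s; split.
- by move=> k /(chain_nth chain_s) [].
- by move=> k /(chain_nth chain_s) [].
rewrite last_s; apply: upper_diagonal_antitone (cnmA) _.
exact: sorted_leaves_antitone cnm p_order rows_sorted cols_sorted cnmA.
Qed.
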